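(* Let $X$ be a finite simplicial complex and $d\ge 0$. Put $r_d=\dim(\operatorname{im}(B_d^\intercal))$, $r_{d+1}=\dim(\operatorname{im}(B_{d+1}))$ and $n_d=\dim(C_d(X))$. Consider vector fields on $C_d(X)$ of the form $$\theta\mapsto B_d^\intercal F^{\downarrow}(B_d\theta)+B_{d+1}F^{\uparrow}(B_{d+1}^\intercal\theta),\qquad (\ast)$$ where $F^{\downarrow}:C_{d-1}(X)\to C_{d-1}(X)$ and $F^{\uparrow}:C_{d+1}(X)\to C_{d+1}(X)$ are arbitrary (nonlinear) maps. The conjugacy classes of all systems of the form $(\ast)$ are exactly the $(r_d,r_{d+1},n_d)$-vector fields. More specifically, every vector field of the form $(\ast)$ is conjugate to an $(r_d,r_{d+1},n_d)$-vector field; conversely, any $(r_d,r_{d+1},n_d)$-vector field is conjugate to a vector field of the form $(\ast)$ for some choice of $F^{\downarrow},F^{\uparrow}$.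
   Context: A finite simplicial complex $X$ on vertex set $\{1,\dots,n\}$ is a collection of nonempty subsets of $\{1,\dots,n\}$ closed under taking nonempty subsets; $X_d$ is the set of its simplices with $d+1$ elements. A $d$-simplex with vertices $i_0<\dots<i_d$ is written $[i_0,\dots,i_d]$. $C_d(X)$ is the real vector space with basis $X_d$ and the inner product making $X_d$ orthonormal ($C_d(X)=0$ if $X_d=\emptyset$; in particular $C_{-1}(X)=0$). The boundary map $\partial_d:C_d(X)\to C_{d-1}(X)$ is $\partial_d[i_0,\dots,i_d]=\sum_{k=0}^d(-1)^k[i_0,\dots,\widehat{i_k},\dots,i_d]$ (vertex $i_k$ omitted), and $B_d$ is its matrix with respect to fixed orderings of the bases $X_d$, $X_{d-1}$; $B_d^\intercal$ is its transpose. A map $H:\mathbb{R}^n\to\mathbb{R}^n$ is an $(\alpha,\beta,n)$-vector field ($\alpha+\beta\le n$) if there exist $H_1:\mathbb{R}^\alpha\to\mathbb{R}^\alpha$ and $H_2:\mathbb{R}^\beta\to\mathbb{R}^\beta$ with $H=H_1\oplus H_2\oplus H_3$ with respect to $\mathbb{R}^n=\mathbb{R}^\alpha\oplus\mathbb{R}^\beta\oplus\mathbb{R}^{n-\alpha-\beta}$, where $H_3$ is the zero map on $\mathbb{R}^{n-\alpha-\beta}$. Two vector fields $G$ on $U$ and $H$ on $V$ are conjugate if there is an invertible linear map $M:U\to V$ with $G(x)=M^{-1}H(Mx)$ for all $x$. *)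

From HB Require Import structures.
From mathcomp Require Import all_boot all_order all_algebra.
From mathcomp Require Import reals.
Set Implicit Arguments. Unset Strict Implicit. Unset Printing Implicit Defensive.
Import Order.TTheory GRing.Theory Num.Theory.
Local Open Scope ring_scope.

(* Vertices 1..n are represented by 'I_n (i.e. 0..n-1, same order). *)

Definition is_complex (n : nat) (X : {set {set 'I_n}}) : Prop :=
  (forall s, s \in X -> s != set0) /\
  (forall s t : {set 'I_n}, s \in X -> t \subset s -> t != set0 -> t \in X).

(* simplices with exactly k vertices; X_d = simp X d.+1 *)
Definition simp (n : nat) (X : {set {set 'I_n}}) (k : nat) : {set {set 'I_n}} :=
  [set s in X | #|s| == k].

(* coefficient of tau in the boundary of sigma:
   (-1)^k if tau = sigma minus its k-th vertex (0-based, increasing order) *)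
Definition bnd_coef (R : realType) (n : nat) (tau sigma : {set 'I_n}) : R :=
  \sum_(v in sigma | tau == sigma :\ v)
     (-1) ^+ #|[set u in sigma | (u < v)%N]|.

(* B_d = bmat X d : matrix of d-boundary, rows indexed by X_{d-1}
   (sets of size d), columns by X_d (sets of size d+1), orderings by enum. *)
Definition bmat (R : realType) (n : nat) (X : {set {set 'I_n}}) (d : nat)
  : 'M[R]_(#|simp X d|, #|simp X d.+1|) :=
  \matrix_(i, j) bnd_coef R (enum_val i) (enum_val j).

Definition star_field (R : realType) (n : nat) (X : {set {set 'I_n}}) (d : nat)
  (Fdown : 'cV[R]_(#|simp X d|) -> 'cV[R]_(#|simp X d|))
  (Fup : 'cV[R]_(#|simp X d.+2|) -> 'cV[R]_(#|simp X d.+2|))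
  (theta : 'cV[R]_(#|simp X d.+1|)) : 'cV[R]_(#|simp X d.+1|) :=
  (bmat R X d)^T *m Fdown (bmat R X d *m theta)
  + bmat R X d.+1 *m Fup ((bmat R X d.+1)^T *m theta).

(* j-th coordinate (0-based) of x, or 0 if out of range *)
Definition coord (R : realType) (m : nat) (x : 'cV[R]_m) (j : nat) : R :=
  \sum_(i < m | val i == j) x i 0.

(* (a,b,m)-vector field: H = H1 (+) H2 (+) 0 w.r.t. R^a (+) R^b (+) R^(m-a-b) *)
Definition abn_field (R : realType) (a b m : nat)
  (H : 'cV[R]_m -> 'cV[R]_m) : Prop :=
  (a + b <= m)%N /\
  exists (H1 : 'cV[R]_a -> 'cV[R]_a) (H2 : 'cV[R]_b -> 'cV[R]_b),
    forall (x : 'cV[R]_m) (i : 'I_m),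
      H x i 0 =
        if (i < a)%N then coord (H1 (\col_(j < a) coord x j)) i
        else if (i < a + b)%N then
          coord (H2 (\col_(j < b) coord x (a + j))) (i - a)
        else 0.

Definition conjugate (R : realType) (m : nat)
  (G H : 'cV[R]_m -> 'cV[R]_m) : Prop :=
  exists M : 'M[R]_m, M \in unitmx /\
    forall x, G x = invmx M *m H (M *m x).

From Pilot Require Import Defs.
From HB Require Import structures.
From mathcomp Require Import all_boot all_order all_algebra.
From mathcomp Require Import reals.
Set Implicit Arguments. Unset Strict Implicit. Unset Printing Implicit Defensive.
Import Order.TTheory GRing.Theory Num.Theory.
Local Open Scope ring_scope.

(* Since B_d B_(d+1) = 0, the subspaces im B_d^T, im B_(d+1) and
   ker B_d ∩ ker B_(d+1)^T of C_d(X) are mutually orthogonal, span C_d(X), and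
   have dimensions r_d, r_(d+1) and n_d - r_d - r_(d+1).  In a basis adapted to
   this splitting the term B_d^T F(B_d x) depends on, and moves, only the first
   block of coordinates, and B_(d+1) F(B_(d+1)^T x) only the second.  On these
   blocks B_d and B_(d+1)^T are injective while the coefficient maps back into
   C_d(X) are surjective, so every pair of block fields H_1, H_2 is obtained by
   a suitable choice of F_down and F_up. *)

Section CoordinateEmbedding.
Variable R : comPzRingType.

(* The inclusion of R^p into R^m as the coordinates o, ..., o + p - 1; it
   expresses the splittings R^m = R^a ⊕ R^b ⊕ R^c without casts on dimensions. *)
Definition emb_mx (m p o : nat) : 'M[R]_(m, p) :=
  \matrix_(i, j) (i == o + j :> nat)%:R.

Lemma sum_indicator (n t : nat) (F : nat -> R) :
  \sum_(i < n) (i == t :> nat)%:R * F i = (t < n)%:R * F t.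
Proof.
under eq_bigr do rewrite mulr_natl mulrb.
by rewrite -big_mkcond big_ord1_eq mulr_natl mulrb.
Qed.

Lemma emb_mx_tr_mul m p q o1 o2 :
  (emb_mx m p o1)^T *m emb_mx m q o2 =
  \matrix_(j, k) ((o1 + j < m) && (o1 + j == o2 + k))%N%:R.
Proof.
apply/matrixP => j k; rewrite !mxE.
under eq_bigr do rewrite !mxE.
by rewrite (sum_indicator _ _ (fun i => (i == o2 + k)%N%:R)) -natrM mulnb.
Qed.

Lemma emb_mx_trK m p o : (o + p <= m)%N -> (emb_mx m p o)^T *m emb_mx m p o = 1%:M.
Proof.
move=> opm; rewrite emb_mx_tr_mul; apply/matrixP => j k; rewrite !mxE eqn_add2l.
by rewrite (leq_trans _ opm) ?ltn_add2l.
Qed.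

Lemma emb_mx_tr_mul_disjoint m p q o1 o2 : (o1 + p <= o2)%N ->
  (emb_mx m p o1)^T *m emb_mx m q o2 = 0 /\ (emb_mx m q o2)^T *m emb_mx m p o1 = 0.
Proof.
move=> o12; suff E0 : (emb_mx m p o1)^T *m emb_mx m q o2 = 0.
  by split=> //; rewrite -[LHS]trmxK trmx_mul trmxK E0 trmx0.
rewrite emb_mx_tr_mul; apply/matrixP => j k; rewrite !mxE.
suff /negbTE-> : o1 + j != o2 + k by rewrite andbF.
by rewrite neq_ltn (leq_trans _ (leq_addr _ _)) // (leq_trans _ o12) // ltn_add2l.
Qed.

Lemma emb_mx_mul_tr m p o : emb_mx m p o *m (emb_mx m p o)^T =
  \matrix_(i, j) ((o <= i < o + p) && (i == j :> nat))%N%:R.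
Proof.
apply/matrixP => i j; rewrite !mxE.
under eq_bigr do rewrite !mxE.
case: (leqP o i) => [oi|io] /=; last first.
  rewrite big1 // => k _; suff /negbTE-> : i != o + k :> nat by rewrite mul0r.
  by rewrite neq_ltn ltn_addr.
rewrite -(subnKC oi) ltn_add2l.
under eq_bigr do rewrite eqn_add2l eq_sym.
rewrite (sum_indicator _ _ (fun k => (j == o + k :> nat)%:R)).
by rewrite -natrM mulnb (eq_sym (j : nat)).
Qed.

Lemma emb_mx_partition a b c m : (a + b + c = m)%N ->
  emb_mx m a 0 *m (emb_mx m a 0)^T + emb_mx m b a *m (emb_mx m b a)^T
  + emb_mx m c (a + b) *m (emb_mx m c (a + b))^T = 1%:M.
Proof.
move=> abc; rewrite !emb_mx_mul_tr; apply/matrixP => i j; rewrite !mxE -!natrD.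
congr _%:R; rewrite -(inj_eq val_inj) /= eq_sym.
case: eqP => _; rewrite ?andbF ?andbT //= -addnA abc ltn_ord andbT.
rewrite add0n; case: (ltnP i a) => ia /=; first by rewrite leqNgt ltn_addr.
by case: ltnP.
Qed.

End CoordinateEmbedding.

Section SplitFields.
Variable R : realType.
Implicit Types (a b m o p : nat).

Lemma coord_out p (v : 'cV[R]_p) k : (p <= k)%N -> Defs.coord v k = 0.
Proof.
by move=> pk; apply: big1 => j /eqP jk; move: (ltn_ord j); rewrite jk ltnNge pk.
Qed.

Lemma col_coord_emb_mx m p o (x : 'cV[R]_m) :
  \col_(j < p) Defs.coord x (o + j) = (emb_mx R m p o)^T *m x.
Proof.
apply/colP => j; rewrite !mxE /Defs.coord big_mkcond /=.
by apply: eq_bigr => i _; rewrite !mxE mulr_natl mulrb.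
Qed.

Lemma emb_mx_mulE m p o (v : 'cV[R]_p) (i : 'I_m) :
  (emb_mx R m p o *m v) i 0 = if (o <= i)%N then Defs.coord v (i - o) else 0.
Proof.
rewrite !mxE /Defs.coord; under eq_bigr do rewrite !mxE mulr_natl mulrb.
rewrite -big_mkcond; case: (leqP o i) => [oi|io].
  by apply: eq_bigl => j; rewrite -{1}(subnKC oi) eqn_add2l eq_sym.
by apply: big_pred0 => j; apply/negbTE; rewrite neq_ltn (ltn_addr _ io).
Qed.

Lemma abn_fieldP a b m (H : 'cV[R]_m -> 'cV[R]_m) :
  abn_field a b H <->
  (a + b <= m)%N /\
  exists (H1 : 'cV[R]_a -> 'cV[R]_a) (H2 : 'cV[R]_b -> 'cV[R]_b), forall x,
    H x = emb_mx R m a 0 *m H1 ((emb_mx R m a 0)^T *m x)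
          + emb_mx R m b a *m H2 ((emb_mx R m b a)^T *m x).
Proof.
have splitE H1 H2 (x : 'cV[R]_m) (i : 'I_m) :
    (emb_mx R m a 0 *m H1 ((emb_mx R m a 0)^T *m x)
     + emb_mx R m b a *m H2 ((emb_mx R m b a)^T *m x)) i 0 =
    if (i < a)%N then Defs.coord (H1 (\col_(j < a) Defs.coord x j)) i
    else if (i < a + b)%N then
      Defs.coord (H2 (\col_(j < b) Defs.coord x (a + j))) (i - a)
    else 0.
  rewrite mxE !emb_mx_mulE subn0 -!col_coord_emb_mx.
  case: (ltnP i a) => [ia|ai]; first by rewrite addr0.
  rewrite coord_out // add0r; case: ltnP => // abi.
  by rewrite coord_out // leq_subRL.
split=> -[abm [H1 [H2 HE]]]; split=> //; exists H1, H2 => x.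
  by apply/colP => i; rewrite HE splitE.
by move=> i; rewrite HE splitE.
Qed.

End SplitFields.

Section Orthogonality.
Variable R : realFieldType.

Lemma row_mul_tr_eq0 m (v : 'rV[R]_m) : (v *m v^T == 0) = (v == 0).
Proof.
apply/eqP/eqP => [|->]; last by rewrite mul0mx.
move/matrixP/(_ 0 0); rewrite !mxE => sq0; apply/rowP => j; rewrite mxE.
have /psumr_eq0P sq_eq0 : \sum_(k < m) v 0 k ^+ 2 = 0.
  by rewrite -[RHS]sq0; apply: eq_bigr => k _; rewrite mxE expr2.
by apply/eqP; rewrite -sqrf_eq0 sq_eq0 // => k _; apply: sqr_ge0.
Qed.

Lemma gram_unitmx m p (A : 'M[R]_(m, p)) : row_free A^T -> A^T *m A \in unitmx.
Proof.
move=> freeA; rewrite -row_free_unit -kermx_eq0; apply/rowV0P => v.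
rewrite sub_kermx => /eqP vAA0; apply: (row_free_inj freeA); rewrite mul0mx.
apply/eqP; rewrite -row_mul_tr_eq0.
by rewrite trmx_mul trmxK !mulmxA -(mulmxA v) vAA0 mul0mx.
Qed.

Lemma capmx_orth p q m (A : 'M[R]_(p, m)) (B : 'M[R]_(q, m)) :
  A *m B^T = 0 -> (A :&: B)%MS = 0.
Proof.
move=> AB0; apply/eqP/rowV0P => v vAB; apply/eqP; rewrite -row_mul_tr_eq0.
have /submxP [x vxA] := submx_trans vAB (capmxSl A B).
have /submxP [y vyB] := submx_trans vAB (capmxSr A B).
by rewrite {1}vxA vyB trmx_mul !mulmxA -(mulmxA x) AB0 mulmx0 !mul0mx.
Qed.

Lemma mxrank_col_mx_orth p q m (A : 'M[R]_(p, m)) (B : 'M[R]_(q, m)) :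
  A *m B^T = 0 -> \rank (col_mx A B) = (\rank A + \rank B)%N.
Proof.
move=> AB0; rewrite -addsmxE -mxrank_sum_cap capmx_orth //.
by rewrite mxrank0 addn0.
Qed.

Lemma col_base_factor p q (A : 'M[R]_(p, q)) : exists W, col_base A = A *m W.
Proof.
have [W KW] := row_freeP (row_base_free A).
by exists W; rewrite -[LHS]mulmx1 -KW mulmxA mulmx_base.
Qed.

Lemma col_base_tr_free p q (A : 'M[R]_(p, q)) : row_free (col_base A)^T.
Proof. by rewrite /row_free mxrank_tr; apply: col_base_full. Qed.

Lemma tr_mul_col_base_linv p q (A : 'M[R]_(p, q)) :
  exists L, L *m (A^T *m col_base A) = 1%:M.
Proof.
have : row_free ((col_base A)^T *m col_base A *m row_base A).
  rewrite /row_free mxrankMfree ?row_base_free // mxrank_unit //.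
  exact/gram_unitmx/col_base_tr_free.
rewrite -mulmxA mulmx_base => /row_freeP[B AB1].
by exists B^T; rewrite -trmx1 -AB1 trmx_mul trmx_mul trmxK.
Qed.

End Orthogonality.

Section OrthogonalBlocks.
Variables (R : realFieldType) (m k1 k2 k3 : nat).
Variables (A1 : 'M[R]_(m, k1)) (A2 : 'M[R]_(m, k2)) (A3 : 'M[R]_(m, k3)).

Local Notation E1 := (emb_mx R m k1 0).
Local Notation E2 := (emb_mx R m k2 k1).
Local Notation E3 := (emb_mx R m k3 (k1 + k2)).

Definition row_mx3 : 'M[R]_m := A1 *m E1^T + A2 *m E2^T + A3 *m E3^T.

Hypothesis k_sum : (k1 + k2 + k3 = m)%N.

Let E11 : E1^T *m E1 = 1%:M.
Proof. by apply: emb_mx_trK; rewrite -k_sum -addnA leq_addr. Qed.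
Let E22 : E2^T *m E2 = 1%:M.
Proof. by apply: emb_mx_trK; rewrite -k_sum leq_addr. Qed.
Let E12 := @emb_mx_tr_mul_disjoint R m k1 k2 0 k1 (leqnn k1).
Let E13 := @emb_mx_tr_mul_disjoint R m k1 k3 0 (k1 + k2) (leq_addr k2 k1).
Let E23 := @emb_mx_tr_mul_disjoint R m k2 k3 k1 (k1 + k2) (leqnn (k1 + k2)).

Lemma row_mx3_emb1 : row_mx3 *m E1 = A1.
Proof.
by rewrite !mulmxDl -!mulmxA E11 E12.2 E13.2 !mulmx0 !addr0 mulmx1.
Qed.

Lemma row_mx3_emb2 : row_mx3 *m E2 = A2.
Proof.
by rewrite !mulmxDl -!mulmxA E12.1 E22 E23.2 !mulmx0 add0r addr0 mulmx1.
Qed.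

Hypotheses (A1_free : row_free A1^T) (A2_free : row_free A2^T)
  (A3_free : row_free A3^T).
Hypotheses (A12 : A1^T *m A2 = 0) (A13 : A1^T *m A3 = 0) (A23 : A2^T *m A3 = 0).

Lemma row_mx3_unit : row_mx3 \in unitmx.
Proof.
have tr0 p q (B : 'M[R]_(m, p)) (C : 'M[R]_(m, q)) : B^T *m C = 0 -> C^T *m B = 0.
  by move=> BC0; rewrite -[LHS]trmxK trmx_mul trmxK BC0 trmx0.
have A21 := tr0 _ _ _ _ A12; have A31 := tr0 _ _ _ _ A13.
have A32 := tr0 _ _ _ _ A23.
have gramK p (B E : 'M[R]_(m, p)) :
    row_free B^T -> E *m invmx (B^T *m B) *m B^T *m B = E.
  by move=> freeB; rewrite -!mulmxA mulVmx ?mulmx1 ?gram_unitmx.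
pose Q := E1 *m invmx (A1^T *m A1) *m A1^T + E2 *m invmx (A2^T *m A2) *m A2^T
        + E3 *m invmx (A3^T *m A3) *m A3^T.
suff QP : Q *m row_mx3 = 1%:M by case/mulmx1_unit: QP.
rewrite -(emb_mx_partition R k_sum) /row_mx3 !mulmxDr !mulmxDl -!mulmxA.
rewrite !(mulmxA (_^T) A1) !(mulmxA (_^T) A2) !(mulmxA (_^T) A3).
rewrite A12 A13 A23 A21 A31 A32 !mul0mx !mulmx0 !addr0 !add0r.
by rewrite !mulmxA !gramK.
Qed.

End OrthogonalBlocks.

Lemma sum_antisym_eq0 (R : numDomainType) (I : finType) (A : {pred I})
    (F : I -> I -> R) :
  (forall i j, F j i = - F i j) -> \sum_(i in A) \sum_(j in A) F i j = 0.
Proof.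
move=> Fanti; set S := (X in X = 0).
have : S = - S.
  rewrite {1}/S exchange_big -sumrN; apply: eq_bigr => i _.
  by rewrite -sumrN; apply: eq_bigr => j _; rewrite Fanti.
by move/eqP; rewrite -subr_eq0 opprK -mulr2n mulrn_eq0 => /eqP.
Qed.

Section BoundarySquare.
Variables (R : realType) (n : nat).
Implicit Types (rho sig tau : {set 'I_n}) (v w : 'I_n).

Definition face_sign sig v : R := (-1) ^+ #|[set u in sig | (u < v)%N]|.

Lemma face_sign_setD1 rho v w : v \in rho -> w != v ->
  face_sign (rho :\ v) w = face_sign rho w * (-1) ^+ (v < w)%N.
Proof.
move=> vrho wv; rewrite /face_sign (cardsD1 v [set u in rho | (u < w)%N]) inE vrho.
have -> : [set u in rho | (u < w)%N] :\ v = [set u in rho :\ v | (u < w)%N].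
  by apply/setP => u; rewrite !inE andbA.
by rewrite exprD mulrC mulrA -exprD addnn -mul2n exprM sqrrN !expr1n mul1r.
Qed.

Lemma sum_mul_bnd_coef (S : {set {set 'I_n}}) rho (G : {set 'I_n} -> R) :
  (forall v, v \in rho -> rho :\ v \in S) ->
  \sum_(sig in S) G sig * bnd_coef R sig rho =
  \sum_(v in rho) G (rho :\ v) * face_sign rho v.
Proof.
move=> facetsS.
under eq_bigr => sig _ do rewrite /bnd_coef mulr_sumr big_mkcondr /=.
rewrite exchange_big /=; apply: eq_bigr => v vrho.
rewrite -big_mkcondr /= (big_pred1 (rho :\ v)) // => sig /=.
by apply/andP/eqP => [[_ /eqP]|->]; [|split; [apply: facetsS|]].
Qed.

Lemma bnd_coef_mul_sum_eq0 (S : {set {set 'I_n}}) tau rho :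
  (forall v, v \in rho -> rho :\ v \in S) ->
  \sum_(sig in S) bnd_coef R tau sig * bnd_coef R sig rho = 0.
Proof.
move=> facetsS; rewrite sum_mul_bnd_coef //.
(* Removing v and then w, or w and then v, gives the same face with opposite
   signs. *)
pose F v w : R := if (w != v) && (tau == rho :\ v :\ w)
  then face_sign rho w * face_sign rho v * (-1) ^+ (v < w)%N else 0.
have Fanti v w : F w v = - F v w.
  rewrite /F eq_sym setDDl setUC -setDDl.
  have [->|wv] /= := eqVneq v w; first by rewrite oppr0.
  case: (tau == _); last by rewrite oppr0.
  rewrite [face_sign rho v * _]mulrC.
  case: (ltngtP v w) => vw; rewrite ?expr0 ?expr1 ?mulrN1 ?mulr1 ?opprK //.
  by move: wv; rewrite (val_inj vw) eqxx.
rewrite -[RHS](sum_antisym_eq0 rho Fanti).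
apply: eq_bigr => v vrho; rewrite /bnd_coef mulr_suml big_mkcond [RHS]big_mkcond /=.
apply: eq_bigr => w _; rewrite /F !inE.
have [->|wv] /= := eqVneq w v; first by case: ifP.
case: (w \in rho); case: (tau == _) => //=.
by rewrite -/(face_sign (rho :\ v) w) face_sign_setD1 // mulrAC.
Qed.

End BoundarySquare.

Lemma bmat_mul_eq0 (R : realType) n (X : {set {set 'I_n}}) d :
  is_complex X -> bmat R X d *m bmat R X d.+1 = 0.
Proof.
move=> [_ downX]; apply/matrixP => i k; rewrite !mxE.
under eq_bigr do rewrite !mxE.
rewrite -(big_enum_val
  (fun s => bnd_coef R (enum_val i) s * bnd_coef R s (enum_val k))).
apply: bnd_coef_mul_sum_eq0 => v vk.
have := enum_valP k; rewrite !inE => /andP [kX /eqP card_k].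
have card_kv : #|enum_val k :\ v| = d.+1.
  by move: card_k; rewrite (cardsD1 v) vk => -[].
rewrite card_kv eqxx andbT; apply: (downX _ _ kX); first exact: subsetDl.
by apply/eqP => kv0; move: card_kv; rewrite kv0 cards0.
Qed.

Section GradientFieldSplitting.
Variables (R : realType) (m0 m m2 : nat) (D : 'M[R]_(m0, m)) (U : 'M[R]_(m, m2)).

Definition grad_field (Fd : 'cV[R]_m0 -> 'cV[R]_m0) (Fu : 'cV[R]_m2 -> 'cV[R]_m2)
  (x : 'cV[R]_m) : 'cV[R]_m :=
  D^T *m Fd (D *m x) + U *m Fu (U^T *m x).

Hypothesis DU0 : D *m U = 0.

Local Notation a := (\rank D^T).
Local Notation b := (\rank U).
Local Notation E1 := (emb_mx R m a 0).
Local Notation E2 := (emb_mx R m b a).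
Local Notation K := (cokermx (col_mx D U^T)).
Local Notation A1 := (col_base D^T).
Local Notation A2 := (col_base U).
Local Notation A3 := (col_base K).
(* The three column blocks of P are mutually orthogonal because D *m U = 0. *)
Local Notation P := (row_mx3 A1 A2 A3).

Lemma rank_partition : (a + b + \rank K = m)%N.
Proof.
have rank_DU : \rank (col_mx D U^T) = (a + b)%N.
  by rewrite mxrank_col_mx_orth ?trmxK // !mxrank_tr.
by rewrite mxrank_coker rank_DU subnKC // -rank_DU rank_leq_col.
Qed.

Let K_orth : D *m K = 0 /\ U^T *m K = 0.
Proof.
have /andP[/eqP-> /eqP->] // : (D *m K == 0) && (U^T *m K == 0).
by rewrite -col_mx_eq0 -mul_col_mx mulmx_coker.
Qed.

Let D_A2 : D *m A2 = 0.
Proof. by have [W ->] := col_base_factor U; rewrite mulmxA DU0 mul0mx. Qed.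
Let D_A3 : D *m A3 = 0.
Proof. by have [W ->] := col_base_factor K; rewrite mulmxA K_orth.1 mul0mx. Qed.
Let U_A1 : U^T *m A1 = 0.
Proof.
by have [W ->] := col_base_factor D^T; rewrite mulmxA -trmx_mul DU0 trmx0 mul0mx.
Qed.
Let U_A3 : U^T *m A3 = 0.
Proof. by have [W ->] := col_base_factor K; rewrite mulmxA K_orth.2 mul0mx. Qed.

Let P_unit : P \in unitmx.
Proof.
have [W1 A1E] := col_base_factor D^T; have [W2 A2E] := col_base_factor U.
apply: row_mx3_unit; rewrite ?rank_partition ?col_base_tr_free //.
- by rewrite A1E trmx_mul trmxK -mulmxA D_A2 mulmx0.
- by rewrite A1E trmx_mul trmxK -mulmxA D_A3 mulmx0.
- by rewrite A2E trmx_mul -mulmxA U_A3 mulmx0.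
Qed.

Lemma grad_field_split Fd Fu y :
  invmx P *m grad_field Fd Fu (P *m y) =
  E1 *m (row_base D^T *m Fd (D *m A1 *m (E1^T *m y)))
  + E2 *m (row_base U *m Fu (U^T *m A2 *m (E2^T *m y))).
Proof.
have DP : D *m (P *m y) = D *m A1 *m (E1^T *m y).
  rewrite mulmxA /row_mx3 !mulmxDr (mulmxA D A2) (mulmxA D A3) D_A2 D_A3.
  by rewrite !mul0mx !addr0 !mulmxA.
have UP : U^T *m (P *m y) = U^T *m A2 *m (E2^T *m y).
  rewrite mulmxA /row_mx3 !mulmxDr (mulmxA _ A1) (mulmxA _ A3) U_A1 U_A3.
  by rewrite !mul0mx addr0 add0r !mulmxA.
have DT v : D^T *m v = P *m (E1 *m (row_base D^T *m v)).
  by rewrite (mulmxA P) row_mx3_emb1 ?rank_partition // mulmxA mulmx_base.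
have UE v : U *m v = P *m (E2 *m (row_base U *m v)).
  by rewrite (mulmxA P) row_mx3_emb2 ?rank_partition // mulmxA mulmx_base.
by rewrite /grad_field DP UP DT UE -mulmxDr mulmxA mulVmx ?mul1mx.
Qed.

Theorem grad_field_conjugacy :
  (forall Fd Fu, exists H, abn_field a b H /\ conjugate (grad_field Fd Fu) H) /\
  (forall H, abn_field a b H -> exists Fd Fu, conjugate H (grad_field Fd Fu)).
Proof.
have abm : (a + b <= m)%N by rewrite -[X in (_ <= X)%N]rank_partition leq_addr.
split=> [Fd Fu | H].
  exists (fun y => invmx P *m grad_field Fd Fu (P *m y)); split.
    apply/abn_fieldP; split=> //.
    exists (fun z => row_base D^T *m Fd (D *m A1 *m z)).
    exists (fun z => row_base U *m Fu (U^T *m A2 *m z)) => y.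
    by rewrite grad_field_split.
  exists (invmx P); split=> [|x]; first by rewrite unitmx_inv.
  by rewrite invmxK !mulmxA mulmxV // !mul1mx.
case/abn_fieldP => _ [H1 [H2 HE]].
have [W1 KW1] := row_freeP (row_base_free D^T).
have [W2 KW2] := row_freeP (row_base_free U).
have [L1 LD1] := tr_mul_col_base_linv D^T; rewrite trmxK in LD1.
have [L2 LU1] := tr_mul_col_base_linv U.
exists (fun z => W1 *m H1 (L1 *m z)), (fun z => W2 *m H2 (L2 *m z)).
exists P; split=> // x.
rewrite grad_field_split HE (mulmxA L1) (mulmxA L2) LD1 LU1 !mul1mx.
by rewrite (mulmxA (row_base D^T)) (mulmxA (row_base U)) KW1 KW2 !mul1mx.
Qed.

End GradientFieldSplitting.

Theorem mainTheorem1 (R : realType) (n : nat) (X : {set {set 'I_n}})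
  (hX : is_complex X) (d : nat) :
  (forall (Fdown : 'cV[R]_(#|simp X d|) -> 'cV[R]_(#|simp X d|))
          (Fup : 'cV[R]_(#|simp X d.+2|) -> 'cV[R]_(#|simp X d.+2|)),
     exists H : 'cV[R]_(#|simp X d.+1|) -> 'cV[R]_(#|simp X d.+1|),
       abn_field (\rank (bmat R X d)^T) (\rank (bmat R X d.+1)) H
       /\ conjugate (star_field Fdown Fup) H)
  /\
  (forall H : 'cV[R]_(#|simp X d.+1|) -> 'cV[R]_(#|simp X d.+1|),
     abn_field (\rank (bmat R X d)^T) (\rank (bmat R X d.+1)) H ->
     exists (Fdown : 'cV[R]_(#|simp X d|) -> 'cV[R]_(#|simp X d|))
            (Fup : 'cV[R]_(#|simp X d.+2|) -> 'cV[R]_(#|simp X d.+2|)),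
       conjugate H (star_field Fdown Fup)).
Proof. exact: grad_field_conjugacy (bmat_mul_eq0 R d hX). Qed.
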